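(* Let $G$ be a conference graph of order $v > 9$, i.e. a strongly regular graph with parameters $(v,k,\lambda,\mu) = \left(v, \frac{v-1}{2}, \frac{v-5}{4}, \frac{v-1}{4}\right)$. Then $G$ is optimistic: the distance matrix $D(G)$ has strictly more positive eigenvalues than negative eigenvalues, i.e. $n_{+}(G) > n_{-}(G)$.
   Context: For a connected graph $G$, the distance matrix $D(G)$ is the matrix indexed by vertices whose $(u,w)$ entry is the graph distance $d(u,w)$. $n_{+}(G)$ and $n_{-}(G)$ denote the number of strictly positive and strictly negative eigenvalues of $D(G)$ (counted with multiplicity). A graph is called optimistic if $n_{+}(G) > n_{-}(G)$. A strongly regular graph with parameters $(v,k,\lambda,\mu)$ is a $k$-regular graph on $v$ vertices in which every pair of adjacent vertices has exactly $\lambda$ common neighbours and every pair of distinct non-adjacent vertices has exactly $\mu$ common neighbours. *)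

From HB Require Import structures.
From mathcomp Require Import all_boot all_order all_algebra.
From mathcomp Require Import polyorder polyrcf.
Set Implicit Arguments. Unset Strict Implicit. Unset Printing Implicit Defensive.
Import Order.TTheory GRing.Theory Num.Theory.

Definition simple_graph (T : finType) (adj : rel T) : Prop :=
  symmetric adj /\ irreflexive adj.

Definition connected_graph (T : finType) (adj : rel T) : Prop :=
  forall u w : T, connect adj u w.

Definition walkn (T : finType) (adj : rel T) (n : nat) (u w : T) : bool :=
  [exists p : n.-tuple T, path adj u p && (last u p == w)].

(* Graph distance: least n with a walk of length n (searched in [0, #|T|),
   which suffices for connected graphs). *)
Definition gdist (T : finType) (adj : rel T) (u w : T) : nat :=
  find (fun n => walkn adj n u w) (iota 0 #|T|).

Definition dist_matrix (R : nzRingType) (T : finType) (adj : rel T)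
  : 'M[R]_#|T| :=
  \matrix_(i, j) ((gdist adj (enum_val i) (enum_val j))%:R)%R.

Definition n_pos (R : rcfType) (n : nat) (A : 'M[R]_n) : nat :=
  \sum_(x <- rootsR (char_poly A) | (0 < x)%R) multiplicity x (char_poly A).
Definition n_neg (R : rcfType) (n : nat) (A : 'M[R]_n) : nat :=
  \sum_(x <- rootsR (char_poly A) | (x < 0)%R) multiplicity x (char_poly A).

Definition optimistic (R : rcfType) (T : finType) (adj : rel T) : Prop :=
  n_neg (dist_matrix R adj) < n_pos (dist_matrix R adj).

Definition strongly_regular (T : finType) (adj : rel T)
  (v k lam mu : nat) : Prop :=
  [/\ simple_graph adj, #|T| = v,
      (forall x : T, #|[set y | adj x y]| = k),
      (forall x y : T, adj x y -> #|[set z | adj x z && adj y z]| = lam) &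
      (forall x y : T, x != y -> ~~ adj x y ->
          #|[set z | adj x z && adj y z]| = mu)].

(* The distance matrix of a conference graph of order v = 4 mu + 1 is
   D = 2 (J - I) - A, since the graph has diameter 2.  The strongly regular
   identities for A give (D - 3k) (D^2 + 3 D + 2 - mu) = 0, so D is
   diagonalizable with eigenvalues among 3k and a, b = (-3 -+ sqrt v) / 2.
   The traces of D^0, D and D^2, namely v, 0 and 5 k v, determine the three
   multiplicities: they are 1, k and k.  Hence n_+ = k + 1 > k = n_-; that b is
   positive is exactly where v > 9 is used. *)

From HB Require Import structures.
From mathcomp Require Import all_boot all_order all_algebra.
From mathcomp Require Import polyorder polyrcf.
From mathcomp Require Import ring lra zify.
Set Implicit Arguments. Unset Strict Implicit. Unset Printing Implicit Defensive.
Import Order.TTheory GRing.Theory Num.Theory.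
Local Open Scope ring_scope.

Lemma multiplicity_mup (R : rcfType) (p : {poly R}) x :
  p != 0 -> \mu_x p = mup x p.
Proof.
move=> p0; apply/eqP; rewrite eqn_leq mup_geq // root_le_mu // leqnn /=.
by rewrite -root_le_mu // -mup_geq.
Qed.

Lemma sum_mu_rootsR_prod_XsubC (R : rcfType) (s : seq R) (P : pred R) :
  let p := \prod_(x <- s) ('X - x%:P) in
  (\sum_(x <- rootsR p | P x) \mu_x p)%N = count P s.
Proof.
move=> p; have p0 : p != 0 by rewrite monic_neq0 // monic_prod_XsubC.
have rootsR_undup : perm_eq (rootsR p) (undup s).
  apply: uniq_perm; rewrite ?undup_uniq ?uniq_roots // => x.
  by rewrite mem_undup -(roots_on_rootsR p0) in_itv /= root_prod_XsubC.
rewrite (perm_big _ rootsR_undup) /=.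
under eq_bigr => x _ do rewrite multiplicity_mup // mu_prod_XsubC
  -[count_mem x s]mul1n -iter_addn_0 -Monoid.iteropE.
by rewrite (big_undup_iterop_count addn) sum1_count.
Qed.

Lemma char_poly_conj (F : fieldType) n (P A : 'M[F]_n) :
  P \in unitmx -> char_poly (invmx P *m A *m P) = char_poly A.
Proof.
move=> Pu; set fP := map_mx (@polyC F) P; set fPi := map_mx (@polyC F) (invmx P).
have fPiP : fPi *m fP = 1%:M by rewrite -map_mxM mulVmx // map_mx1.
have fPPi : fP *m fPi = 1%:M by rewrite -map_mxM mulmxV // map_mx1.
rewrite /char_poly.
have -> : char_poly_mx (invmx P *m A *m P) = fPi *m char_poly_mx A *m fP.
  rewrite /char_poly_mx !map_mxM mulmxBr mulmxBl -/fP -/fPi.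
  by rewrite mul_mx_scalar -scalemxAl fPiP scalemx1.
by rewrite !det_mulmx mulrC mulrA -det_mulmx fPPi det1 mul1r.
Qed.

Lemma annihilated_mx_spectrum (F : fieldType) n (D : 'M[F]_n) (rs : seq F) :
  uniq rs -> \prod_(r <- rs) (D - r%:M) = 0 ->
  exists s : seq F, [/\ char_poly D = \prod_(x <- s) ('X - x%:P),
    {subset s <= rs} & forall m, \tr (D ^+ m) = \sum_(x <- s) x ^+ m].
Proof.
case: n D => [|n] D rsU hD.
  exists [::]; split => // [|m]; first by rewrite /char_poly det_mx00 big_nil.
  by rewrite /mxtrace big_ord0 big_nil.
pose p := \prod_(r <- rs) ('X - r%:P).
have Dp : horner_mx D p = 0.
  rewrite rmorph_prod -[RHS]hD; apply: eq_bigr => r _.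
  by rewrite rmorphB /= horner_mx_X horner_mx_C.
have [P Pu /(similar_diagLR Pu)[d]] : diagonalizable D.
  by apply/diagonalizableP; exists rs => //; apply: mxminpoly_min.
rewrite conjVmx // => DE.
have hornerE q : horner_mx D q = invmx P *m diag_mx (map_mx (horner q) d) *m P.
  by rewrite DE horner_mx_uconjC // horner_mx_diag.
exists [seq d 0 i | i <- enum 'I_n.+1]; split.
- rewrite DE char_poly_conj // char_poly_trig ?diag_mx_is_trig // big_map big_enum.
  by apply: eq_bigr => i _; rewrite mxE eqxx.
- move=> _ /mapP[i _ ->]; rewrite -root_prod_XsubC -/p.
  have : diag_mx (map_mx (horner p) d) = 0.
    have -> : diag_mx (map_mx (horner p) d) = P *m horner_mx D p *m invmx P.
      by rewrite hornerE !mulmxA mulmxV // mul1mx -mulmxA mulmxV // mulmx1.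
    by rewrite Dp mulmx0 mul0mx.
  by move/matrixP/(_ i i); rewrite !mxE eqxx mulr1n => /rootP.
- move=> m; have -> : D ^+ m = horner_mx D 'X^m by rewrite rmorphXn /= horner_mx_X.
  rewrite hornerE -mulmxA mxtrace_mulC mulmxK // mxtrace_diag big_map big_enum.
  by apply: eq_bigr => i _; rewrite mxE hornerXn.
Qed.

Lemma perm_eq_nseq3 (T : eqType) (s : seq T) (t a b : T) :
  uniq [:: t; a; b] -> {subset s <= [:: t; a; b]} ->
  perm_eq s (nseq (count_mem t s) t ++ nseq (count_mem a s) a
             ++ nseq (count_mem b s) b).
Proof.
rewrite /= !inE !negb_or -!andbA => /and4P[ta tb ab _] sub.
apply/allP => x _ /=; rewrite !count_cat !count_nseq /=.
have [xtab | xNtab] := boolP (x \in [:: t; a; b]).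
  move: xtab; rewrite !inE => /or3P[] /eqP ->;
  by rewrite !eqxx ?(eq_sym a t, eq_sym b t, eq_sym b a) ?(negPf ta, negPf tb, negPf ab)
     /= ?mul1n ?addn0.
have /count_memPn -> : x \notin s by apply: contra xNtab => /sub.
move: xNtab; rewrite !inE !negb_or ![x == _]eq_sym.
by case/and3P => /negPf-> /negPf-> /negPf->.
Qed.

Lemma vandermonde3_eq0 (F : fieldType) (t a b x y z : F) :
  uniq [:: t; a; b] ->
  (forall m, (m < 3)%N -> x * t ^+ m + y * a ^+ m + z * b ^+ m = 0) ->
  [/\ x = 0, y = 0 & z = 0].
Proof.
rewrite /= !inE !negb_or -!andbA => /and4P[ta tb ab _] S.
have [[S0 S1] S2] := (S 0%N isT, S 1%N isT, S 2%N isT).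
rewrite !expr0 !expr1 !mulr1 in S0 S1.
(* The polynomial (X - u)(X - w) kills two of the nodes and isolates the third. *)
have isolate u w : x * ((t - u) * (t - w)) + y * ((a - u) * (a - w))
    + z * ((b - u) * (b - w)) = 0.
  have -> : x * ((t - u) * (t - w)) + y * ((a - u) * (a - w)) + z * ((b - u) * (b - w))
      = (x * t ^+ 2 + y * a ^+ 2 + z * b ^+ 2) - (u + w) * (x * t + y * a + z * b)
        + u * w * (x + y + z) by ring.
  by rewrite S2 S1 S0; ring.
have := isolate a b; have := isolate t b; have := isolate t a.
rewrite !subrr !(mul0r, mulr0, addr0, add0r) => /eqP + /eqP + /eqP.
rewrite !mulf_eq0 !subr_eq0.
rewrite ![a == t]eq_sym ![b == t]eq_sym ![b == a]eq_sym.
by rewrite (negPf ta) (negPf tb) (negPf ab) !orbF => /eqP-> /eqP-> /eqP->.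
Qed.

Lemma sum_nseq (V : nmodType) (T : Type) (n : nat) (x : T) (F : T -> V) :
  \sum_(y <- nseq n x) F y = F x *+ n.
Proof. by elim: n => [|n IHn]; rewrite ?big_nil // big_cons IHn mulrS. Qed.

Lemma spectrum3_from_power_sums (R : numFieldType) (s : seq R) (t a b : R)
    (mt ma mb : nat) :
  uniq [:: t; a; b] -> {subset s <= [:: t; a; b]} ->
  (forall m, (m < 3)%N -> \sum_(x <- s) x ^+ m
                          = mt%:R * t ^+ m + ma%:R * a ^+ m + mb%:R * b ^+ m) ->
  perm_eq s (nseq mt t ++ nseq ma a ++ nseq mb b).
Proof.
move=> tab sub psum; have sE := perm_eq_nseq3 tab sub.
set ct := count_mem t s in sE; set ca := count_mem a s in sE.
set cb := count_mem b s in sE.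
have [] : [/\ ct%:R - mt%:R = 0 :> R, ca%:R - ma%:R = 0 :> R & cb%:R - mb%:R = 0 :> R].
  apply: vandermonde3_eq0 tab _ => m /psum.
  rewrite (perm_big _ sE) !big_cat !sum_nseq /= => psum_m.
  rewrite -(subrr (mt%:R * t ^+ m + ma%:R * a ^+ m + mb%:R * b ^+ m)) -{1}psum_m.
  by ring.
by move=> /eqP + /eqP + /eqP; rewrite !subr_eq0 !eqr_nat => /eqP <- /eqP <- /eqP <-.
Qed.

Section Distance.
Local Open Scope nat_scope.
Variables (T : finType) (adj : rel T).

Lemma walkn0 u w : walkn adj 0 u w = (u == w).
Proof.
apply/existsP/eqP => [[p]|->]; first by rewrite (tuple0 p) /= => /eqP.
by exists [tuple]; rewrite /= eqxx.
Qed.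

Lemma walkn1 u w : walkn adj 1 u w = adj u w.
Proof.
apply/existsP/idP => [[p]|uw]; last by exists [tuple w]; rewrite /= uw eqxx.
by case/tupleP: p => x p; rewrite (tuple0 p) /= andbT => /andP[ux /eqP <-].
Qed.

Lemma walkn2 u z w : adj u z -> adj z w -> walkn adj 2 u w.
Proof. by move=> uz zw; apply/existsP; exists [tuple z; w]; rewrite /= uz zw eqxx. Qed.

Lemma gdist_diam2 u w : 2 < #|T| ->
  (u != w -> ~~ adj u w -> exists2 z, adj u z & adj z w) ->
  gdist adj u w = if u == w then 0 else if adj u w then 1 else 2.
Proof.
rewrite /gdist; case: #|T| => [|[|[|n]]] // _ common.
rewrite /= walkn0 walkn1; have [//|uw] := eqVneq u w.
have [//|uNw] := boolP (adj u w).
by have [z uz zw] := common uw uNw; rewrite (walkn2 uz zw).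
Qed.

End Distance.

Definition adj_mx (R : nzRingType) (T : finType) (adj : rel T) : 'M[R]_#|T| :=
  \matrix_(i, j) (adj (enum_val i) (enum_val j))%:R.

Lemma sum_enum_val_indicator (R : nzRingType) (T : finType) (P : pred T) :
  \sum_(i < #|T|) (P (enum_val i))%:R = #|[set z | P z]|%:R :> R.
Proof.
rewrite -(big_enum_val (A := T) (fun z => (P z)%:R : R)) -sum1_card natr_sum.
by rewrite [RHS]big_mkcond; apply: eq_bigr => z _; rewrite inE; case: (P z).
Qed.

Lemma dist_matrix_diam2 (R : nzRingType) (T : finType) (adj : rel T) :
  irreflexive adj -> (2 < #|T|)%N ->
  (forall u w, u != w -> ~~ adj u w -> exists2 z, adj u z & adj z w) ->
  dist_matrix R adj = 2 *: (const_mx 1 - 1%:M) - adj_mx R adj.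
Proof.
move=> irr T3 common; apply/matrixP => i j; rewrite !mxE (gdist_diam2 T3 (common _ _)).
rewrite (inj_eq enum_val_inj); have [<-|ij] := eqVneq i j.
  by rewrite irr subrr mulr0 subr0.
by case: (adj _ _); rewrite /= !subr0 !mulr1 // mulr2n addrK.
Qed.

Section StronglyRegular.
Variables (R : nzRingType) (T : finType) (adj : rel T) (v k lam mu : nat).
Hypothesis srg : strongly_regular adj v k lam mu.
Local Notation A := (adj_mx R adj).
Local Notation J := (const_mx 1 : 'M[R]_#|T|).

Lemma adj_mx_diag i : A i i = 0.
Proof. by have [[_ irr] _ _ _ _] := srg; rewrite mxE irr. Qed.

Lemma adj_mx_mulJ : A *m J = k%:R *: J.
Proof.
have [_ _ deg _ _] := srg; apply/matrixP => i j; rewrite !mxE.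
under eq_bigr do rewrite !mxE mulr1.
by rewrite sum_enum_val_indicator deg mulr1.
Qed.

Lemma mulJ_adj_mx : J *m A = k%:R *: J.
Proof.
have [[sym _] _ deg _ _] := srg; apply/matrixP => i j; rewrite !mxE.
under eq_bigr do rewrite !mxE mul1r sym.
by rewrite sum_enum_val_indicator deg mulr1.
Qed.

Lemma adj_mx_sqr :
  A *m A = k%:R%:M + lam%:R *: A + mu%:R *: (J - 1%:M - A).
Proof.
have [[sym irr] _ deg adjE nadjE] := srg; apply/matrixP => i j; rewrite !mxE.
under eq_bigr do rewrite !mxE -natrM mulnb.
rewrite (sum_enum_val_indicator _ (fun z => adj (enum_val i) z && adj z (enum_val j))).
have common_nbrs x y : [set z | adj x z && adj z y] = [set z | adj x z && adj y z].
  by apply/setP => z; rewrite !inE (sym z).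
rewrite common_nbrs; have [<-|ij] := eqVneq i j.
  have -> : [set z | adj (enum_val i) z && adj (enum_val i) z] = [set z | adj (enum_val i) z].
    by apply/setP => z; rewrite !inE andbb.
  by rewrite deg irr /= subrr subr0 !mulr0 !addr0.
have xy : enum_val i != enum_val j by rewrite (inj_eq enum_val_inj).
have [xAy|xNy] := boolP (adj (enum_val i) (enum_val j)).
  by rewrite adjE //= subr0 subrr mulr0 mulr1 add0r addr0.
by rewrite nadjE //= !subr0 mulr0 mulr1 !add0r.
Qed.

End StronglyRegular.

Lemma mulmx_const1 (R : nzRingType) n :
  (const_mx 1 : 'M[R]_n) *m (const_mx 1 : 'M[R]_n) = n%:R *: const_mx 1.
Proof.
apply/matrixP => i j; rewrite !mxE.
by under eq_bigr do rewrite !mxE mulr1; rewrite sumr_const card_ord mulr1.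
Qed.

Section ConferenceMatrix.
Variables (R : comNzRingType) (n : nat) (A : 'M[R]_n) (m : R).
Local Notation J := (const_mx 1 : 'M[R]_n).
Hypotheses (AA : A *m A = (2 * m)%:M + (m - 1) *: A + m *: (J - 1%:M - A))
  (AJ : A *m J = (2 * m) *: J) (JA : J *m A = (2 * m) *: J)
  (JJ : J *m J = (4 * m + 1) *: J).
Local Notation D := (2 *: (J - 1%:M) - A).

Lemma conference_dist_mx_mulJ : D *m J = (6 * m) *: J.
Proof.
rewrite !mulmxBl -scalemxAl mulmxBl mul1mx JJ AJ.
by apply/matrixP => i j; rewrite !mxE; ring.
Qed.

Lemma conference_dist_mx_sqr : D *m D = (9 * m + 2) *: J - 3 *: D + (m - 2)%:M.
Proof.
rewrite !mulmxBl !mulmxBr -!scalemxAl -!scalemxAr !mulmxBl !mulmxBr.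
rewrite !mul1mx !mulmx1 AA AJ JA JJ.
by apply/matrixP => i j; rewrite !mxE; ring.
Qed.

Lemma conference_dist_mx_annihilated (a b : R) : a + b = -3 -> a * b = 2 - m ->
  \prod_(r <- [:: 6 * m; a; b]) (D - r%:M) = 0.
Proof.
move=> ab_sum ab_prod; rewrite !big_cons big_nil mulr1 -!mulmxE.
move: conference_dist_mx_sqr conference_dist_mx_mulJ; move: D => M MM MJ.
have -> : (M - a%:M) *m (M - b%:M) = (9 * m + 2) *: J.
  rewrite !mulmxBl !mulmxBr !mul_scalar_mx mul_mx_scalar MM.
  have mE : m = 2 - a * b by rewrite ab_prod opprB addrC subrK.
  have bE : b = -3 - a by rewrite -ab_sum addrC addKr.
  by apply/matrixP => i j; rewrite !mxE mE bE; ring.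
by rewrite -scalemxAr mulmxBl MJ mul_scalar_mx subrr scaler0.
Qed.

End ConferenceMatrix.

Lemma conference_dist_mx_spectrum (R : numFieldType) n (A : 'M[R]_n) (m : nat)
    (a b : R) :
  let J := const_mx 1 : 'M[R]_n in
  n = (4 * m + 1)%N -> (forall i, A i i = 0) ->
  A *m A = (2 * m%:R)%:M + (m%:R - 1) *: A + m%:R *: (J - 1%:M - A) ->
  A *m J = (2 * m%:R) *: J -> J *m A = (2 * m%:R) *: J ->
  a + b = -3 -> a * b = 2 - m%:R -> uniq [:: 6 * m%:R; a; b] ->
  exists2 s, char_poly (2 *: (J - 1%:M) - A) = \prod_(x <- s) ('X - x%:P)
           & perm_eq s (nseq 1 (6 * m%:R) ++ nseq (2 * m) a ++ nseq (2 * m) b).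
Proof.
move=> J nE A0 AA AJ JA ab_sum ab_prod tab.
have nR : n%:R = 4 * m%:R + 1 :> R by rewrite nE natrD natrM.
have JJ : J *m J = (4 * m%:R + 1) *: J by rewrite mulmx_const1 nR.
have [s [cpE sub psum]] := annihilated_mx_spectrum tab
  (conference_dist_mx_annihilated AA AJ JA JJ ab_sum ab_prod).
exists s => //; apply: spectrum3_from_power_sums => // i i_lt3.
have bE : b = -3 - a by rewrite -ab_sum addrC addKr.
have mE : m%:R = 2 - a * b by rewrite ab_prod opprB addrC subrK.
rewrite -psum natrM; move: i_lt3; case: i => [|[|[|//]]] _.
- by rewrite expr0 mxtrace1 nR; ring.
- rewrite expr1 /mxtrace; under eq_bigr do rewrite !mxE eqxx A0.
  by rewrite sumr_const card_ord /= bE; ring.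
rewrite expr2 -mulmxE (conference_dist_mx_sqr AA AJ JA JJ) /mxtrace.
under eq_bigr do rewrite !mxE eqxx A0.
by rewrite sumr_const card_ord /= mulr1n -[_ *+ n]mulr_natr nR mE bE; ring.
Qed.

Lemma conference_eigenvalues (R : rcfType) (m : nat) : (2 < m)%N ->
  let s := Num.sqrt (4 * m%:R + 1) : R in
  let a := (-3 - s) / 2 in let b := (-3 + s) / 2 in
  [/\ a + b = -3, a * b = 2 - m%:R, uniq [:: 6 * m%:R; a; b], a < 0 & 0 < b].
Proof.
move=> m_gt2 s a b; have m3 : 3 <= m%:R :> R by rewrite (ler_nat R 3).
have s2 : s ^+ 2 = 4 * m%:R + 1 by rewrite sqr_sqrtr //; lra.
have s3 : 3 < s by have := sqrtr_ge0 (4 * m%:R + 1 : R); rewrite -/s; nra.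
have a_neg : a < 0 by rewrite /a; lra.
have b_pos : 0 < b by rewrite /b; lra.
split=> //; first by rewrite /a /b; field.
- have -> : a * b = (9 - s ^+ 2) / 4 by rewrite /a /b; field.
  by rewrite s2; field.
rewrite /= !inE !negb_or -!andbA; apply/and4P; split => //; apply/eqP => e.
- by move: a_neg; rewrite -e; lra.
- by move: s2; rewrite /b in e; nra.
- by move: a_neg b_pos; rewrite e; lra.
Qed.

Local Close Scope ring_scope.

Theorem theorem1 (R : rcfType) (T : finType) (adj : rel T) (v k lam mu : nat) :
  strongly_regular adj v k lam mu ->
  2 * k + 1 = v -> 4 * lam + 5 = v -> 4 * mu + 1 = v ->
  9 < v ->
  connected_graph adj ->
  optimistic R adj.
Proof.
move=> srg e1 e2 e3 v9 _; have [[sym irr] card_v _ _ nadjE] := srg.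
have card_T : #|T| = 4 * mu + 1 by lia.
have common u w : u != w -> ~~ adj u w -> exists2 z, adj u z & adj z w.
  move=> uw uNw; have : 0 < #|[set z | adj u z && adj w z]| by rewrite nadjE //; lia.
  by case/card_gt0P => z; rewrite inE (sym w) => /andP[]; exists z.
have kR : (k%:R = 2 * mu%:R :> R)%R by rewrite (_ : k = 2 * mu) ?natrM //; lia.
have lamR : (lam%:R = mu%:R - 1 :> R)%R by rewrite (_ : mu = lam.+1) ?mulrSr ?addrK //; lia.
have AA := adj_mx_sqr R srg; have AJ := adj_mx_mulJ R srg; have JA := mulJ_adj_mx R srg.
rewrite kR lamR in AA AJ JA.
have [ab_sum ab_prod tab a_neg b_pos] := @conference_eigenvalues R mu ltac:(lia).
have [s cpE spE] := conference_dist_mx_spectrum card_T (adj_mx_diag R srg) AA AJ JA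
  ab_sum ab_prod tab.
rewrite /optimistic /n_pos /n_neg (dist_matrix_diam2 R irr ltac:(lia) common) cpE.
rewrite !sum_mu_rootsR_prod_XsubC !(permP spE) !count_cat !count_nseq /=.
have t_pos : (0 < 6 * mu%:R :> R)%R by rewrite mulr_gt0 // ltr0n; lia.
by rewrite a_neg b_pos t_pos (lt_gtF t_pos) (lt_gtF a_neg) (lt_gtF b_pos) /=; lia.
Qed.
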